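(* Let $g>0$, $p_0<p_1<0$, $[\![\rho]\!]<0$, $\Gamma_{\mathrm{rel}}>0$, and let $Q(\lambda)=\dfrac{2g[\![\rho]\!](p_1-p_0)}{\lambda}+\Gamma_{\mathrm{rel}}^2-\lambda^2$ for $\lambda>0$. For each integer $n\ge1$ such that $$\frac{g[\![\rho]\!]}{n}-\Gamma_{\mathrm{rel}}^2\coth\Big(\frac{np_1}{\Gamma_{\mathrm{rel}}}\Big)<0,$$ $Q$ is an invertible function of $\lambda$ in a neighborhood of $\lambda_n^*$, where $\lambda_n^*>0$ is the unique solution of $\frac{g[\![\rho]\!]}{n}=\Gamma_{\mathrm{rel}}^2\coth(\frac{np_1}{\Gamma_{\mathrm{rel}}})-\lambda^2\coth(\frac{n(p_1-p_0)}{\lambda})$.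
   Context: $[\![\rho]\!]=\rho_{\mathrm{air}}-\rho_{\mathrm{water}}<0$ is the density jump across the air–water interface, $g$ the gravitational constant; $Q(\lambda)$ is the Bernoulli-type constant of the laminar irrotational two-layer flow with water-region parameter $\lambda$ and air relative circulation $\Gamma_{\mathrm{rel}}$. *)

From Stdlib Require Import Reals.
Open Scope R_scope.

Definition coth (x : R) : R := cosh x / sinh x.

(* Q(lambda) = 2 g [[rho]] (p1 - p0) / lambda + Gamma_rel^2 - lambda^2,
   meaningful for lambda > 0; rho stands for the density jump [[rho]]. *)
Definition Qfun (g rho p0 p1 Gam lam : R) : R :=
  2 * g * rho * (p1 - p0) / lam + Gam ^ 2 - lam ^ 2.

Definition lam_star_eq (g rho p0 p1 Gam : R) (n : nat) (lam : R) : Prop :=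
  g * rho / INR n =
  Gam ^ 2 * coth (INR n * p1 / Gam) - lam ^ 2 * coth (INR n * (p1 - p0) / lam).

(** Writing [d = n (p1 - p0)], the equation for [lambda_n^*] reads
    [lambda^2 coth (d / lambda) = K] with [K = Gam^2 coth (n p1 / Gam) - g rho / n],
    and the hypothesis says exactly [K > 0].  The left-hand side is continuous and
    strictly increasing in [lambda > 0], tends to [0] at [0] and to infinity at
    infinity, so the solution exists and is unique.

    With [M = - g rho (p1 - p0) > 0] we have [Q(x) = - 2 M / x + Gam^2 - x^2], and
    [Q(x) = Q(y)] forces [x = y] or [x y (x + y) = 2 M]; since [x y (x + y) <= x^3 + y^3],
    [Q] is injective on [{x > 0 | x^3 < M}].  Finally [coth t > 1 / t] gives
    [lambda_n^*^3 < d K = d Gam^2 coth (n p1 / Gam) + M < M], so a whole neighbourhood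
    of [lambda_n^*] lies in that region. *)

From Coquelicot Require Import Coquelicot.
From Stdlib Require Import Reals Lra Lia.
Open Scope R_scope.

Lemma coth_exp t : t <> 0 -> coth t = 1 + 2 / (exp (2 * t) - 1).
Proof.
  intros Ht. unfold coth, cosh, sinh.
  assert (Hu : 0 < exp t) by apply exp_pos.
  assert (Hsq : exp (2 * t) = exp t * exp t)
    by (replace (2 * t) with (t + t) by ring; apply exp_plus).
  assert (Hne : exp t * exp t <> 1).
  { rewrite <- Hsq, <- exp_0. intros E. apply exp_inv in E. lra. }
  assert (Hne' : exp t - / exp t <> 0).
  { intros E. apply Hne.
    replace (exp t * exp t) with (exp t * (exp t - / exp t) + 1) by (field; lra).
    rewrite E. ring. }
  rewrite Hsq, exp_Ropp. field. repeat split; lra.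
Qed.

Lemma exp_double_gt_1 t : 0 < t -> 1 < exp (2 * t).
Proof. intros Ht. rewrite <- exp_0. apply exp_increasing. lra. Qed.

Lemma coth_gt_1 t : 0 < t -> 1 < coth t.
Proof.
  intros Ht. rewrite coth_exp by lra.
  pose proof (exp_double_gt_1 t Ht).
  assert (0 < 2 / (exp (2 * t) - 1)) by (apply Rdiv_lt_0_compat; lra).
  lra.
Qed.

Lemma coth_lt_0 t : t < 0 -> coth t < 0.
Proof.
  intros Ht. rewrite coth_exp by lra.
  assert (exp (2 * t) < 1) by (rewrite <- exp_0; apply exp_increasing; lra).
  pose proof (exp_pos (2 * t)).
  replace (1 + 2 / (exp (2 * t) - 1))
    with ((exp (2 * t) + 1) * / (exp (2 * t) - 1)) by (field; lra).
  assert (/ (exp (2 * t) - 1) < 0) by (apply Rinv_lt_0_compat; lra).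
  nra.
Qed.

Lemma coth_decreasing s t : 0 < s -> s < t -> coth t < coth s.
Proof.
  intros Hs Hst. rewrite !coth_exp by lra.
  pose proof (exp_double_gt_1 s Hs).
  assert (exp (2 * s) < exp (2 * t)) by (apply exp_increasing; lra).
  unfold Rdiv. apply Rplus_lt_compat_l, Rmult_lt_compat_l; [lra |].
  apply Rinv_lt_contravar; nra.
Qed.

Lemma coth_lt_1_add_inv t : 0 < t -> coth t < 1 + / t.
Proof.
  intros Ht. rewrite coth_exp by lra.
  (* [exp (2 t) - 1 > 2 t] *)
  pose proof (exp_ineq1 (2 * t) ltac:(lra)).
  replace (/ t) with (2 / (2 * t)) by (field; lra).
  unfold Rdiv. apply Rplus_lt_compat_l, Rmult_lt_compat_l; [lra |].
  apply Rinv_lt_contravar; nra.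
Qed.

Lemma sinh_lt_mul_cosh t : 0 < t -> sinh t < t * cosh t.
Proof.
  intros Ht.
  (* mean value theorem for [s cosh s - sinh s], whose derivative is [s sinh s] *)
  destruct (MVT_cor2 (fun s => s * cosh s - sinh s) (fun s => s * sinh s) 0 t Ht)
    as [c [Hc [Hc0 Hct]]].
  { intros c _.
    replace (c * sinh c) with ((1 * cosh c + c * sinh c) - cosh c) by ring.
    apply derivable_pt_lim_minus; [apply derivable_pt_lim_mult |].
    - apply derivable_pt_lim_id.
    - apply derivable_pt_lim_cosh.
    - apply derivable_pt_lim_sinh. }
  rewrite sinh_0, Rmult_0_l, Rminus_0_r in Hc.
  assert (0 < sinh c) by (rewrite <- sinh_0; apply sinh_lt; lra).
  assert (0 < c * sinh c * (t - 0)) by (apply Rmult_lt_0_compat; nra).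
  lra.
Qed.

Lemma inv_lt_coth t : 0 < t -> / t < coth t.
Proof.
  intros Ht. unfold coth.
  assert (0 < sinh t) by (rewrite <- sinh_0; apply sinh_lt; lra).
  pose proof (sinh_lt_mul_cosh t Ht).
  apply (Rmult_lt_reg_r (t * sinh t)); [nra |].
  replace (/ t * (t * sinh t)) with (sinh t) by (field; lra).
  replace (cosh t / sinh t * (t * sinh t)) with (t * cosh t) by (field; lra).
  lra.
Qed.

Definition sqr_coth (d x : R) : R := x ^ 2 * coth (d / x).

Section SqrCoth.

Variable d : R.
Hypothesis Hd : 0 < d.

Lemma sqr_coth_increasing x y : 0 < x -> x < y -> sqr_coth d x < sqr_coth d y.
Proof.
  intros Hx Hxy. unfold sqr_coth.
  assert (Hdy : 0 < d / y) by (apply Rdiv_lt_0_compat; lra).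
  assert (Hdxy : d / y < d / x)
    by (unfold Rdiv; apply Rmult_lt_compat_l; [lra | apply Rinv_lt_contravar; nra]).
  pose proof (coth_gt_1 _ Hdy).
  pose proof (coth_decreasing _ _ Hdy Hdxy).
  assert (x ^ 2 < y ^ 2) by (simpl; nra).
  nra.
Qed.

Lemma sqr_lt_sqr_coth x : 0 < x -> x ^ 2 < sqr_coth d x.
Proof.
  intros Hx. unfold sqr_coth.
  pose proof (coth_gt_1 (d / x) ltac:(apply Rdiv_lt_0_compat; lra)).
  assert (0 < x ^ 2) by (apply pow_lt; lra).
  nra.
Qed.

Lemma sqr_coth_lt x : 0 < x -> sqr_coth d x < x ^ 2 + x ^ 3 / d.
Proof.
  intros Hx. unfold sqr_coth.
  pose proof (coth_lt_1_add_inv (d / x) ltac:(apply Rdiv_lt_0_compat; lra)).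
  replace (x ^ 2 + x ^ 3 / d) with (x ^ 2 * (1 + / (d / x))) by (field; lra).
  apply Rmult_lt_compat_l; [apply pow_lt | ]; lra.
Qed.

Lemma cube_div_lt_sqr_coth x : 0 < x -> x ^ 3 / d < sqr_coth d x.
Proof.
  intros Hx. unfold sqr_coth.
  pose proof (inv_lt_coth (d / x) ltac:(apply Rdiv_lt_0_compat; lra)).
  replace (x ^ 3 / d) with (x ^ 2 * / (d / x)) by (field; lra).
  apply Rmult_lt_compat_l; [apply pow_lt | ]; lra.
Qed.

Lemma continuity_pt_sqr_coth x : 0 < x -> continuity_pt (sqr_coth d) x.
Proof.
  intros Hx. apply derivable_continuous_pt, ex_derive_Reals_0.
  unfold sqr_coth, coth, cosh, sinh. auto_derive.
  change ((exp (d * / x) + - exp (- (d * / x))) * / 2) with (sinh (d / x)).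
  assert (0 < sinh (d / x))
    by (rewrite <- sinh_0; apply sinh_lt, Rdiv_lt_0_compat; lra).
  repeat split; lra.
Qed.

Lemma sqr_coth_inj x y : 0 < x -> 0 < y -> sqr_coth d x = sqr_coth d y -> x = y.
Proof.
  intros Hx Hy E.
  destruct (Rtotal_order x y) as [Hlt | [Heq | Hgt]]; auto.
  - pose proof (sqr_coth_increasing x y Hx Hlt). lra.
  - pose proof (sqr_coth_increasing y x Hy Hgt). lra.
Qed.

Lemma sqr_coth_surj K : 0 < K -> exists x, 0 < x /\ sqr_coth d x = K.
Proof.
  intros HK.
  set (a := Rmin 1 (K * d / (2 * (d + 1)))).
  assert (Ha0 : 0 < a)
    by (apply Rmin_glb_lt; [lra | apply Rdiv_lt_0_compat; nra]).
  assert (Ha1 : a <= 1) by apply Rmin_l.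
  assert (Ha2 : a * (d + 1) <= K * d / 2).
  { pose proof (Rmin_r 1 (K * d / (2 * (d + 1)))) as Hr. fold a in Hr.
    apply (Rmult_le_compat_r (d + 1)) in Hr; [| lra].
    replace (K * d / (2 * (d + 1)) * (d + 1)) with (K * d / 2) in Hr by (field; lra).
    exact Hr. }
  assert (Hlow : sqr_coth d a < K).
  { pose proof (sqr_coth_lt a Ha0).
    assert (a ^ 3 / d <= a / d)
      by (apply Rmult_le_compat_r; [left; apply Rinv_0_lt_compat |]; simpl; nra).
    assert (a + a / d <= K / 2).
    { replace (a + a / d) with (a * (d + 1) / d) by (field; lra).
      apply (Rmult_le_reg_r d); [lra |].
      replace (a * (d + 1) / d * d) with (a * (d + 1)) by (field; lra). lra. }
    simpl in *. nra. }
  assert (Hhigh : K < sqr_coth d (K + 1)).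
  { pose proof (sqr_lt_sqr_coth (K + 1) ltac:(lra)). nra. }
  destruct (Ranalysis5.IVT_interv (fun x => sqr_coth d x - K) a (K + 1))
    as [x [Hx Hroot]]; simpl; try lra.
  { intros z Hz. apply continuity_pt_minus.
    - apply continuity_pt_sqr_coth. lra.
    - apply continuity_pt_const. intros u v. reflexivity. }
  exists x. split; lra.
Qed.

End SqrCoth.

Lemma lam_star_eq_sqr_coth g rho p0 p1 Gam n mu :
  lam_star_eq g rho p0 p1 Gam n mu <->
  sqr_coth (INR n * (p1 - p0)) mu = Gam ^ 2 * coth (INR n * p1 / Gam) - g * rho / INR n.
Proof. unfold lam_star_eq, sqr_coth. split; intros; lra. Qed.

Lemma Qfun_inj g rho p0 p1 Gam x y :
  0 < x -> 0 < y ->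
  x ^ 3 < - (g * rho * (p1 - p0)) -> y ^ 3 < - (g * rho * (p1 - p0)) ->
  Qfun g rho p0 p1 Gam x = Qfun g rho p0 p1 Gam y -> x = y.
Proof.
  intros Hx Hy HxM HyM E. unfold Qfun in E.
  set (M := - (g * rho * (p1 - p0))) in *.
  assert (Hfac : (x - y) * (2 * M - x * y * (x + y)) = 0).
  { apply (Rmult_eq_reg_l (/ (x * y))); [| apply Rinv_neq_0_compat; nra].
    replace (/ (x * y) * ((x - y) * (2 * M - x * y * (x + y))))
      with ((2 * g * rho * (p1 - p0) / x + Gam ^ 2 - x ^ 2)
            - (2 * g * rho * (p1 - p0) / y + Gam ^ 2 - y ^ 2))
      by (unfold M; field; lra).
    rewrite E. ring. }
  assert (x * y * (x + y) <= x ^ 3 + y ^ 3).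
  { assert (0 <= (x + y) * (x - y) ^ 2) by (apply Rmult_le_pos; [lra | apply pow2_ge_0]).
    simpl in *. nra. }
  apply Rmult_integral in Hfac. destruct Hfac; lra.
Qed.

Lemma cube_lt_near lam M :
  0 < lam -> lam ^ 3 < M ->
  exists eps, 0 < eps /\ eps <= lam /\
    forall x, Rabs (x - lam) < eps -> 0 < x /\ x ^ 3 < M.
Proof.
  intros Hl HM.
  assert (Hl2 : 0 < lam ^ 2) by (apply pow_lt; lra).
  set (eps := Rmin lam ((M - lam ^ 3) / (8 * lam ^ 2))).
  assert (He : 0 < eps)
    by (apply Rmin_glb_lt; [lra | apply Rdiv_lt_0_compat; lra]).
  assert (Hel : eps <= lam) by apply Rmin_l.
  assert (HeM : 8 * lam ^ 2 * eps <= M - lam ^ 3).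
  { pose proof (Rmin_r lam ((M - lam ^ 3) / (8 * lam ^ 2))) as Hr. fold eps in Hr.
    apply (Rmult_le_compat_l (8 * lam ^ 2)) in Hr; [| lra].
    replace (8 * lam ^ 2 * ((M - lam ^ 3) / (8 * lam ^ 2))) with (M - lam ^ 3)
      in Hr by (field; lra).
    exact Hr. }
  exists eps. split; [exact He | split; [exact Hel |]].
  intros x Hx. apply Rabs_def2 in Hx. split; [lra |].
  assert (x ^ 3 < (lam + eps) ^ 3) by (simpl; apply Rmult_le_0_lt_compat; nra).
  assert ((lam + eps) ^ 3 <= lam ^ 3 + 7 * lam ^ 2 * eps).
  { assert (lam * eps * eps <= lam * lam * eps) by (apply Rmult_le_compat_r; nra).
    assert (eps * eps * eps <= lam * lam * eps) by (apply Rmult_le_compat_r; nra).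
    simpl. nra. }
  nra.
Qed.

Theorem lemma3p4 (g rho p0 p1 Gam : R) (n : nat)
  (hg : 0 < g) (hp : p0 < p1) (hp1 : p1 < 0) (hrho : rho < 0) (hGam : 0 < Gam)
  (hn : (1 <= n)%nat)
  (hcond : g * rho / INR n - Gam ^ 2 * coth (INR n * p1 / Gam) < 0) :
  exists lam : R,
    (0 < lam /\ lam_star_eq g rho p0 p1 Gam n lam) /\
    (forall mu : R, 0 < mu -> lam_star_eq g rho p0 p1 Gam n mu -> mu = lam) /\
    exists eps : R, 0 < eps /\ eps <= lam /\
      forall x y : R, Rabs (x - lam) < eps -> Rabs (y - lam) < eps ->
        Qfun g rho p0 p1 Gam x = Qfun g rho p0 p1 Gam y -> x = y.
Proof.
  assert (HN : 0 < INR n) by (apply lt_0_INR; lia).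
  set (d := INR n * (p1 - p0)).
  assert (Hd : 0 < d) by (apply Rmult_lt_0_compat; lra).
  set (A := Gam ^ 2 * coth (INR n * p1 / Gam)) in hcond.
  assert (HA : A < 0).
  { pose proof (coth_lt_0 (INR n * p1 / Gam)
      ltac:(apply Rdiv_neg_pos; [nra | lra])).
    unfold A. assert (0 < Gam ^ 2) by (apply pow_lt; lra). nra. }
  destruct (sqr_coth_surj d Hd (A - g * rho / INR n) ltac:(lra)) as [lam [Hlam HK]].
  assert (Hcube : lam ^ 3 < - (g * rho * (p1 - p0))).
  { pose proof (cube_div_lt_sqr_coth d Hd lam Hlam) as Hc. rewrite HK in Hc.
    apply (Rmult_lt_compat_r d) in Hc; [| exact Hd].
    replace (lam ^ 3 / d * d) with (lam ^ 3) in Hc by (field; lra).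
    replace ((A - g * rho / INR n) * d) with (d * A - g * rho * (p1 - p0))
      in Hc by (unfold d; field; lra).
    nra. }
  destruct (cube_lt_near lam _ Hlam Hcube) as [eps [Heps [Hel Hnear]]].
  exists lam. split; [| split].
  - split; [exact Hlam | apply lam_star_eq_sqr_coth; exact HK].
  - intros mu Hmu Emu. apply lam_star_eq_sqr_coth in Emu.
    apply (sqr_coth_inj d Hd); [exact Hmu | exact Hlam | fold d A in Emu; lra].
  - exists eps. split; [exact Heps | split; [exact Hel |]].
    intros x y Hx Hy. apply Hnear in Hx. apply Hnear in Hy.
    apply Qfun_inj; tauto.
Qed.
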